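(* Let $f$ be analytic on $\mathbb{D}$ with $f(z)=z+\sum_{n=2}^{\infty}a_nz^n$ and $\operatorname{Re}f'(z)>0$ for all $z\in\mathbb{D}$, and let $\Gamma_1=-\frac12a_2$, $\Gamma_2=-\frac12\left(a_3-\frac32a_2^2\right)$. Then $$-\frac13\le|\Gamma_2|-|\Gamma_1|\le\frac13.$$ Both inequalities are sharp.
   Context: $\mathbb{D}=\{z\in\mathbb{C}:|z|<1\}$. The class of such $f$ is the class $\mathcal{R}$ of functions of bounded turning. $\Gamma_1,\Gamma_2$ are the first two logarithmic inverse coefficients: with $F=f^{-1}$ near $0$, $\log\frac{F(w)}{w}=2\sum_{n\ge1}\Gamma_nw^n$ near $0$. *)

From Stdlib Require Import Reals.
From Coquelicot Require Import Coquelicot.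
Open Scope R_scope.

Definition in_disk (z : C) : Prop := Cmod z < 1.

Definition bounded_turning (f : C -> C) (a : nat -> C) : Prop :=
  a 0%nat = 0%C /\ a 1%nat = 1%C /\
  (forall z : C, in_disk z -> is_pseries a z (f z)) /\
  (forall z : C, in_disk z -> exists l : C, is_derive f z l /\ 0 < Re l).

Definition Gamma1 (a : nat -> C) : C := (- (1/2) * a 2%nat)%C.
Definition Gamma2 (a : nat -> C) : C :=
  (- (1/2) * (a 3%nat - (3/2) * (a 2%nat * a 2%nat)))%C.

(* Write f' = p = 1 + b1 z + b2 z^2 + ..., so b_k = (k + 1) a_(k+1) and Re p > 0 on the
   disk.  For a quadratic polynomial P, the average of |P|^2 p(r .) over the N-th roots of
   unity equals N times a Toeplitz form in b0, b1, b2 up to a tail of the series of p, which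
   vanishes as N grows; this discrete Herglotz argument shows that the form has nonnegative
   real part.  Letting r -> 1 and choosing P appropriately gives the Caratheodory bound
   |b2 - b1^2/2| <= 2 - |b1|^2/2.  Since Gamma1 = -b1/4 and
   Gamma2 = -(b2 - b1^2/2)/6 + 5 b1^2/48, the estimate for |Gamma2| - |Gamma1| is then real
   algebra.  Equality holds for f' = lam (1+z)/(1-z) + (1-lam) (1-z)/(1+z) with lam = 1/2
   (value 1/3) and lam = 5/6 (value -1/3). *)

From Stdlib Require Import Reals Lra Lia Psatz ClassicalEpsilon.
From Coquelicot Require Import Coquelicot.
Open Scope R_scope.

(** [rsum f n] and [csum f n] add the first [n] terms, whereas Coquelicot's
    [sum_n f n] adds [n + 1] of them. *)
Fixpoint rsum (f : nat -> R) (n : nat) : R :=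
  match n with O => 0 | S n => rsum f n + f n end.
Fixpoint csum (f : nat -> C) (n : nat) : C :=
  match n with O => RtoC 0 | S n => (csum f n + f n)%C end.

Lemma sum_n_csum (f : nat -> C) n : sum_n f n = csum f (S n).
Proof.
  induction n as [|n IH].
  - rewrite sum_O. simpl. change (f 0%nat = (0 + f 0%nat)%C). ring.
  - rewrite sum_Sn, IH. reflexivity.
Qed.

Lemma sum_n_rsum (f : nat -> R) n : sum_n f n = rsum f (S n).
Proof.
  induction n as [|n IH].
  - rewrite sum_O. simpl. ring.
  - rewrite sum_Sn, IH. reflexivity.
Qed.

Lemma rsum_nonneg (f : nat -> R) n : (forall k, 0 <= f k) -> 0 <= rsum f n.
Proof. intros H; induction n; simpl; [lra|]. specialize (H n). lra. Qed.

Lemma rsum_le (f g : nat -> R) n : (forall k, f k <= g k) -> rsum f n <= rsum g n.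
Proof. intros H; induction n; simpl; [lra|]. specialize (H n). lra. Qed.

Lemma rsum_scal (c : R) (f : nat -> R) n : rsum (fun k => c * f k) n = c * rsum f n.
Proof. induction n as [|n IH]; simpl; [ring|]. rewrite IH. ring. Qed.

Lemma rsum_const (c : R) n : rsum (fun _ => c) n = INR n * c.
Proof. induction n as [|n IH]; simpl rsum; [simpl; ring|]. rewrite IH, S_INR. ring. Qed.

Lemma rsum_le_add (f : nat -> R) m n :
  (forall k, 0 <= f k) -> (m <= n)%nat -> rsum f m <= rsum f n.
Proof.
  intros Hf Hmn. induction Hmn as [|n _ IH]; simpl; [lra|].
  specialize (Hf n). lra.
Qed.

Lemma Cmod_csum_le (u : nat -> C) n : Cmod (csum u n) <= rsum (fun k => Cmod (u k)) n.
Proof.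
  induction n; simpl.
  - rewrite Cmod_0. lra.
  - eapply Rle_trans; [apply Cmod_triangle|]. lra.
Qed.

Lemma csum_ext (f g : nat -> C) n :
  (forall j, (j < n)%nat -> f j = g j) -> csum f n = csum g n.
Proof.
  intros H; induction n; simpl; auto.
  rewrite IHn by (intros; apply H; lia). rewrite H by lia. reflexivity.
Qed.

Lemma csum_plus (f g : nat -> C) n :
  csum (fun j => f j + g j)%C n = (csum f n + csum g n)%C.
Proof. induction n as [|n IH]; simpl; [ring|]. rewrite IH. ring. Qed.

Lemma csum_scal (c : C) (f : nat -> C) n :
  csum (fun j => c * f j)%C n = (c * csum f n)%C.
Proof. induction n as [|n IH]; simpl; [ring|]. rewrite IH. ring. Qed.

Lemma csum_const (c : C) n : csum (fun _ => c) n = (RtoC (INR n) * c)%C.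
Proof.
  induction n as [|n IH]; simpl csum.
  - simpl. ring.
  - rewrite IH, S_INR, RtoC_plus. ring.
Qed.

Lemma csum_geom (x : C) n : ((x - 1) * csum (fun j => x ^ j) n = x ^ n - 1)%C.
Proof.
  induction n as [|n IH]; simpl csum.
  - simpl. ring.
  - rewrite Cmult_plus_distr_l, IH, Cpow_S. ring.
Qed.

Lemma re_csum (u : nat -> C) n : Re (csum u n) = rsum (fun j => Re (u j)) n.
Proof. induction n as [|n IH]; simpl; auto. rewrite <- IH. reflexivity. Qed.

Lemma csum_eventually_const (u : nat -> C) m n :
  (forall k, (m <= k)%nat -> u k = RtoC 0) -> (m <= n)%nat -> csum u n = csum u m.
Proof.
  intros H Hn. induction Hn as [|n Hmn IH]; auto. simpl. rewrite IH, H by exact Hmn. ring.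
Qed.

(** * Complex series *)

Lemma filterlim_C_of_Cmod_bound (s : nat -> C) (l : C) (e : nat -> R) :
  is_lim_seq e 0 -> (forall n, Cmod (s n - l)%C <= e n) ->
  filterlim s eventually (locally l).
Proof.
  intros He Hb.
  apply (filterlim_locally_ball_norm (K := C_AbsRing) (U := C_NormedModule)). intros eps.
  apply is_lim_seq_spec in He. destruct (He eps) as [N HN].
  exists N. intros n Hn. specialize (HN n Hn). specialize (Hb n).
  change (Cmod (s n - l)%C < eps). rewrite Rminus_0_r in HN.
  pose proof (Rle_abs (e n)). lra.
Qed.

Lemma is_series_finite (u : nat -> C) m :
  (forall k, (m <= k)%nat -> u k = RtoC 0) -> is_series u (csum u m).
Proof.
  intros H P [eps HP]. exists m. intros n Hn.
  rewrite sum_n_csum, (csum_eventually_const u m (S n)) by (auto; lia).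
  apply HP, ball_center.
Qed.

Lemma is_series_csum (g : nat -> nat -> C) (s : nat -> C) n :
  (forall j, is_series (g j) (s j)) ->
  is_series (fun k => csum (fun j => g j k) n) (csum s n).
Proof.
  intros H. induction n as [|n IH].
  - apply (is_series_finite (fun _ => RtoC 0) 0). reflexivity.
  - exact (is_series_plus _ _ _ _ IH (H n)).
Qed.

Lemma rsum_le_series (b : nat -> R) (Sb : R) n :
  (forall k, 0 <= b k) -> is_series b Sb -> rsum b n <= Sb.
Proof.
  intros Hb Hs.
  assert (Hl : is_lim_seq (fun m => sum_n b (m + n)) Sb).
  { apply (is_lim_seq_incr_n (sum_n b) n). exact Hs. }
  apply (is_lim_seq_le (fun _ => rsum b n) (fun m => sum_n b (m + n)) (rsum b n) Sb);
    [|apply is_lim_seq_const | exact Hl].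
  intros m. rewrite sum_n_rsum. apply rsum_le_add; [exact Hb | lia].
Qed.

Lemma is_series_Cmod_le (u : nat -> C) (l : C) (B : R) :
  is_series u l -> (forall n, Cmod (csum u n) <= B) -> Cmod l <= B.
Proof.
  intros Hs Hb.
  assert (Hn : is_lim_seq (fun n => Cmod (sum_n u n)) (Cmod l)).
  { eapply filterlim_comp; [exact Hs|]. exact (filterlim_norm (K := C_AbsRing) (V := C_NormedModule) l). }
  apply (is_lim_seq_le (fun n => Cmod (sum_n u n)) (fun _ => B) (Cmod l) B); auto.
  - intros n. rewrite sum_n_csum. apply Hb.
  - apply is_lim_seq_const.
Qed.

Lemma is_series_terms_bounded (u : nat -> C) (l : C) :
  is_series u l -> exists M, forall n, Cmod (u n) <= M.
Proof.
  intros Hs.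
  destruct (filterlim_bounded (K := C_AbsRing) (sum_n u) (ex_intro _ l Hs)) as [M HM].
  exists (2 * M). intros [|n].
  - specialize (HM 0%nat). rewrite sum_O in HM.
    assert (0 <= M) by (eapply Rle_trans; [apply Cmod_ge_0|exact HM]). 
    change (Cmod (u 0%nat) <= M) in HM. lra.
  - assert (E : u (S n) = (sum_n u (S n) - sum_n u n)%C).
    { rewrite sum_Sn. change (u (S n) = (sum_n u n + u (S n)) - sum_n u n)%C. ring. }
    rewrite E. eapply Rle_trans; [apply Cmod_triangle|]. rewrite Cmod_opp.
    pose proof (HM n) as H1. pose proof (HM (S n)) as H2.
    change (Cmod (sum_n u n) <= M) in H1. change (Cmod (sum_n u (S n)) <= M) in H2. lra.
Qed.

Lemma is_pseries_C (a : nat -> C) (w l : C) :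
  is_pseries a w l <-> is_series (fun k => (a k * w ^ k)%C) l.
Proof.
  assert (E : forall k, scal (pow_n w k) (a k) = (a k * w ^ k)%C).
  { intros k. change (scal (pow_n w k) (a k)) with (Cmult (pow_n w k) (a k)).
    apply Cmult_comm. }
  unfold is_pseries. split; apply is_series_ext; intros k; rewrite E; reflexivity.
Qed.

(** * Differentiating complex power series *)

Lemma RtoC_neq0 (x : R) : x <> 0 -> RtoC x <> RtoC 0.
Proof. intros H E. injection E. auto. Qed.

Lemma Cmod_pow_le (z : C) (rho : R) n : Cmod z <= rho -> Cmod (z ^ n)%C <= rho ^ n.
Proof. intros H. rewrite Cmod_pow. apply pow_incr. split; auto. apply Cmod_ge_0. Qed.

Lemma coef_bound_of_series (a : nat -> C) (R1 : R) (l : C) :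
  0 <= R1 -> is_series (fun k => (a k * RtoC R1 ^ k)%C) l ->
  exists M, 0 <= M /\ forall k, Cmod (a k) * R1 ^ k <= M.
Proof.
  intros HR Hs. destruct (is_series_terms_bounded _ _ Hs) as [M HM].
  exists M. split.
  - eapply Rle_trans; [apply Cmod_ge_0|apply (HM 0%nat)].
  - intros k. specialize (HM k).
    rewrite Cmod_mult, Cmod_pow, Cmod_R, Rabs_pos_eq in HM by lra. exact HM.
Qed.

Lemma coef_geom_bound (a : nat -> C) (R0 rho : R) :
  0 <= rho < R0 -> (forall w, Cmod w < R0 -> ex_series (fun k => (a k * w ^ k)%C)) ->
  exists M q, 0 <= M /\ 0 <= q < 1 /\ forall k, Cmod (a k) * rho ^ k <= M * q ^ k.
Proof.
  intros Hrho Hex.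
  set (R1 := (rho + R0) / 2).
  assert (HR1 : 0 < R1 < R0) by (unfold R1; lra).
  assert (HR1m : Cmod (RtoC R1) < R0) by (rewrite Cmod_R, Rabs_pos_eq; lra).
  destruct (Hex (RtoC R1) HR1m) as [l Hl].
  destruct (coef_bound_of_series a R1 l ltac:(lra) Hl) as [M [HM0 HM]].
  exists M, (rho / R1). split; [exact HM0|]. split.
  { split; [apply Rdiv_le_0_compat; lra | apply Rlt_div_l; unfold R1; lra]. }
  intros k. specialize (HM k).
  replace rho with (rho / R1 * R1) at 1 by (field; lra).
  rewrite Rpow_mult_distr.
  assert (0 <= (rho / R1) ^ k) by (apply pow_le, Rdiv_le_0_compat; lra).
  replace (Cmod (a k) * ((rho / R1) ^ k * R1 ^ k)) with ((rho / R1) ^ k * (Cmod (a k) * R1 ^ k)) by ring.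
  rewrite (Rmult_comm M). apply Rmult_le_compat_l; auto.
Qed.

Lemma is_lim_seq_inv_Sn : is_lim_seq (fun n => / INR (S n)) 0.
Proof.
  assert (H := is_lim_seq_inv _ _ is_lim_seq_INR ltac:(discriminate)).
  simpl in H. apply is_lim_seq_incr_1 in H. exact H.
Qed.

Lemma ex_series_sq_geom_pos (q : R) : 0 < q < 1 ->
  ex_series (fun k => INR (S k) ^ 2 * q ^ k).
Proof.
  intros Hq.
  assert (Hpos : forall k, 0 < INR (S k) ^ 2 * q ^ k).
  { intros k. apply Rmult_lt_0_compat; apply pow_lt; [apply lt_0_INR; lia | lra]. }
  apply ex_series_ext with (fun k => Rabs (INR (S k) ^ 2 * q ^ k)).
  { intros n. apply Rabs_pos_eq, Rlt_le, Hpos. }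
  apply ex_series_DAlembert with q; [lra| intros n; apply Rgt_not_eq, Hpos |].
  apply is_lim_seq_ext with (fun n => (1 + / INR (S n)) * (1 + / INR (S n)) * q).
  - intros n. assert (0 < INR (S n)) by (apply lt_0_INR; lia).
    rewrite Rabs_pos_eq.
    + rewrite (S_INR (S n)). set (x := INR (S n)) in *.
      replace (q ^ S n) with (q * q ^ n) by (simpl; ring). field. split; [|lra].
      apply pow_nonzero; lra.
    + apply Rlt_le, Rdiv_lt_0_compat; apply Hpos.
  - assert (Hl : is_lim_seq (fun n => (1 + / INR (S n)) * (1 + / INR (S n)) * q)
                   ((1 + 0) * (1 + 0) * q)).
    { apply is_lim_seq_mult'; [|apply is_lim_seq_const].
      apply is_lim_seq_mult'; apply is_lim_seq_plus';
        try apply is_lim_seq_const; apply is_lim_seq_inv_Sn. }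
    replace ((1 + 0) * (1 + 0) * q) with q in Hl by ring. exact Hl.
Qed.

Lemma ex_series_sq_geom (q : R) : 0 <= q < 1 ->
  ex_series (fun k => INR (S k) ^ 2 * q ^ k).
Proof.
  intros Hq.
  apply (ex_series_le (K := R_AbsRing) (V := R_CompleteNormedModule))
    with (fun k => INR (S k) ^ 2 * ((1 + q) / 2) ^ k).
  - intros n. change norm with Rabs.
    rewrite Rabs_pos_eq by (apply Rmult_le_pos; apply pow_le; [apply pos_INR | lra]).
    apply Rmult_le_compat_l; [apply pow_le, pos_INR|]. apply pow_incr; lra.
  - apply ex_series_sq_geom_pos. lra.
Qed.

Definition pow_remainder (w z : C) (k : nat) : C :=
  (w ^ k - z ^ k - RtoC (INR k) * z ^ (pred k) * (w - z))%C.

Lemma pow_remainder_succ w z k :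
  pow_remainder w z (S k) =
  (w * pow_remainder w z k + RtoC (INR k) * z ^ (pred k) * (w - z) * (w - z))%C.
Proof.
  unfold pow_remainder. destruct k as [|m].
  - simpl. ring.
  - rewrite !S_INR, !RtoC_plus. simpl pred. simpl Cpow. ring.
Qed.

Lemma Cmod_nat_pow_pred_le (z : C) (rho : R) k : Cmod z <= rho ->
  Cmod (RtoC (INR k) * z ^ pred k)%C * rho <= INR k * rho ^ k.
Proof.
  intros Hz. rewrite Cmod_mult, Cmod_R, Rabs_pos_eq by apply pos_INR.
  destruct k as [|k]; simpl pred; [simpl; lra|].
  change (rho ^ S k) with (rho * rho ^ k).
  pose proof (Cmod_pow_le z rho k Hz). pose proof (Cmod_ge_0 z).
  rewrite Rmult_assoc. apply Rmult_le_compat_l; [apply pos_INR|]. nra.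
Qed.

Lemma pow_remainder_bound (w z : C) (rho : R) k : Cmod w <= rho -> Cmod z <= rho ->
  Cmod (pow_remainder w z k) * rho ^ 2 <= INR k ^ 2 * rho ^ k * Cmod (w - z) ^ 2.
Proof.
  intros Hw Hz. set (h := Cmod (w - z)%C).
  assert (Hrho : 0 <= rho) by (eapply Rle_trans; [apply Cmod_ge_0|exact Hw]).
  assert (Hh : 0 <= h) by apply Cmod_ge_0.
  induction k as [|k IH].
  - unfold pow_remainder. simpl.
    replace (1 - 1 - 0 * 1 * (w - z))%C with (RtoC 0) by ring. rewrite Cmod_0. nra.
  - set (e := Cmod (pow_remainder w z k)) in IH.
    set (c := Cmod (RtoC (INR k) * z ^ pred k)%C).
    assert (Htri : Cmod (pow_remainder w z (S k)) <= Cmod w * e + c * h ^ 2).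
    { rewrite pow_remainder_succ. eapply Rle_trans; [apply Cmod_triangle|].
      rewrite !Cmod_mult. unfold e, c, h. rewrite Cmod_mult. right. ring. }
    assert (Hc : c * rho <= INR k * rho ^ k) by apply Cmod_nat_pow_pred_le, Hz.
    assert (Hk : 0 <= INR k) by apply pos_INR.
    assert (He : 0 <= e) by apply Cmod_ge_0.
    assert (Hrk : 0 <= rho ^ k) by (apply pow_le; lra).
    assert (H1 : Cmod w * e * rho ^ 2 <= rho * (INR k ^ 2 * rho ^ k * h ^ 2)).
    { replace (Cmod w * e * rho ^ 2) with (Cmod w * (e * rho ^ 2)) by ring.
      apply Rmult_le_compat; auto; [apply Cmod_ge_0 | nra]. }
    assert (H2 : c * h ^ 2 * rho ^ 2 <= INR k * rho ^ k * rho * h ^ 2).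
    { replace (c * h ^ 2 * rho ^ 2) with (c * rho * (rho * h ^ 2)) by ring.
      replace (INR k * rho ^ k * rho * h ^ 2) with (INR k * rho ^ k * (rho * h ^ 2)) by ring.
      apply Rmult_le_compat_r; [nra | exact Hc]. }
    assert (H3 : Cmod (pow_remainder w z (S k)) * rho ^ 2 <= (Cmod w * e + c * h ^ 2) * rho ^ 2)
      by (apply Rmult_le_compat_r; [apply pow2_ge_0 | exact Htri]).
    assert (HP : 0 <= rho * rho ^ k * h ^ 2) by (apply Rmult_le_pos; [nra | apply pow2_ge_0]).
    replace (INR (S k) ^ 2 * rho ^ S k * h ^ 2)
      with (INR k ^ 2 * (rho * rho ^ k * h ^ 2) + INR k * (rho * rho ^ k * h ^ 2)
            + (INR k + 1) * (rho * rho ^ k * h ^ 2)) by (rewrite S_INR; simpl; ring).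
    assert (0 <= (INR k + 1) * (rho * rho ^ k * h ^ 2)) by (apply Rmult_le_pos; lra).
    assert (E1 : rho * (INR k ^ 2 * rho ^ k * h ^ 2) = INR k ^ 2 * (rho * rho ^ k * h ^ 2)) by ring.
    assert (E2 : INR k * rho ^ k * rho * h ^ 2 = INR k * (rho * rho ^ k * h ^ 2)) by ring.
    lra.
Qed.

Lemma Cmod_coef_pow_remainder_le (c M q rho : R) (y z : C) k :
  0 <= c -> 0 < rho -> 0 <= q -> Cmod y <= rho -> Cmod z <= rho -> c * rho ^ k <= M * q ^ k ->
  c * Cmod (pow_remainder y z k) <= M * Cmod (y - z)%C ^ 2 / rho ^ 2 * (INR (S k) ^ 2 * q ^ k).
Proof.
  intros Hc Hrho Hq Hy Hz Hb.
  pose proof (pow_remainder_bound y z rho k Hy Hz) as He.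
  set (h := Cmod (y - z)%C) in *.
  pose proof (Cmod_ge_0 (pow_remainder y z k)).
  assert (0 < rho ^ k) by (apply pow_lt; lra).
  assert (0 < rho ^ 2) by (apply pow_lt; lra).
  assert (Hk : INR k ^ 2 <= INR (S k) ^ 2) by (rewrite S_INR; pose proof (pos_INR k); nra).
  apply Rmult_le_reg_r with (rho ^ 2); auto.
  replace (M * h ^ 2 / rho ^ 2 * (INR (S k) ^ 2 * q ^ k) * rho ^ 2)
    with ((M * q ^ k) * (INR (S k) ^ 2 * h ^ 2)) by (field; lra).
  apply Rle_trans with (c * (INR k ^ 2 * rho ^ k * h ^ 2)).
  { rewrite Rmult_assoc. apply Rmult_le_compat_l; auto. }
  replace (c * (INR k ^ 2 * rho ^ k * h ^ 2)) with ((c * rho ^ k) * (INR k ^ 2 * h ^ 2)) by ring.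
  apply Rmult_le_compat; [apply Rmult_le_pos; lra | apply Rmult_le_pos; apply pow2_ge_0
                         | exact Hb | apply Rmult_le_compat_r; [apply pow2_ge_0 | exact Hk]].
Qed.

Lemma is_derive_of_remainder_bound (f : C -> C) (z d : C) (K delta : R) :
  0 < delta ->
  (forall y, Cmod (y - z)%C < delta ->
     Cmod (f y - f z - (y - z) * d)%C <= K * Cmod (y - z)%C ^ 2) ->
  is_derive f z d.
Proof.
  intros Hdelta Hb. split; [apply is_linear_scal_l|].
  intros x Hx.
  apply (is_filter_lim_locally_unique (K := C_AbsRing) (V := AbsRing_NormedModule C_AbsRing)) in Hx.
  subst x. intros eps.
  set (del := Rmin delta (eps / (Rabs K + 1))).
  assert (Hdel : 0 < del).
  { apply Rmin_pos; [lra|]. apply Rdiv_lt_0_compat; [apply cond_pos|].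
    pose proof (Rabs_pos K). lra. }
  exists (mkposreal _ Hdel). intros y Hy.
  change (Cmod (y - z)%C < del) in Hy.
  change (Cmod (f y - f z - (y - z) * d)%C <= eps * Cmod (y - z)%C).
  assert (Hd1 : del <= delta) by apply Rmin_l.
  eapply Rle_trans; [apply Hb; lra|].
  assert (Hd2 : del * (Rabs K + 1) <= eps).
  { assert (del <= eps / (Rabs K + 1)) by apply Rmin_r.
    pose proof (Rabs_pos K).
    apply Rle_trans with (eps / (Rabs K + 1) * (Rabs K + 1)); [nra|]. right. field. lra. }
  pose proof (Cmod_ge_0 (y - z)%C). pose proof (Rle_abs K). pose proof (Rabs_pos K).
  generalize dependent (Cmod (y - z)%C). intros h Hy Hh.
  assert (h * (Rabs K + 1) <= eps) by nra.
  simpl. nra.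
Qed.

Section PowerSeriesDerivative.

Variables (a : nat -> C) (f : C -> C) (R0 : R).
Hypothesis Hf : forall w, Cmod w < R0 -> is_series (fun k => (a k * w ^ k)%C) (f w).

Lemma ex_series_derived_pseries (z : C) (rho M q : R) :
  0 < rho -> Cmod z <= rho -> 0 <= M -> 0 <= q < 1 ->
  (forall k, Cmod (a k) * rho ^ k <= M * q ^ k) ->
  ex_series (fun k => (RtoC (INR (S k)) * a (S k) * z ^ k)%C).
Proof.
  intros Hrho Hz HM Hq Hb.
  apply (ex_series_le (K := C_AbsRing) (V := C_CompleteNormedModule))
    with (fun k => M / rho * (INR (S k) ^ 2 * q ^ k)).
  - intros k. change norm with Cmod.
    rewrite !Cmod_mult, Cmod_R, Rabs_pos_eq by apply pos_INR.
    assert (Hk1 : 1 <= INR (S k)) by (apply (le_INR 1); lia).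
    pose proof (Hb (S k)) as HbS. simpl pow in HbS.
    pose proof (Cmod_pow_le z rho k Hz) as Hzk.
    assert (0 < rho ^ k) by (apply pow_lt; lra).
    assert (0 <= q ^ k) by (apply pow_le; lra).
    pose proof (Cmod_ge_0 (a (S k))). pose proof (Cmod_ge_0 (z ^ k)%C).
    assert (Ha : Cmod (a (S k)) * Cmod (z ^ k)%C <= M / rho * q ^ k).
    { apply Rmult_le_reg_l with rho; auto.
      replace (rho * (M / rho * q ^ k)) with (M * q ^ k) by (field; lra).
      apply Rle_trans with (M * (q * q ^ k)).
      { apply Rle_trans with (Cmod (a (S k)) * (rho * rho ^ k)); [|exact HbS].
        replace (rho * (Cmod (a (S k)) * Cmod (z ^ k)%C)) with (Cmod (a (S k)) * (rho * Cmod (z ^ k)%C)) by ring.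
        apply Rmult_le_compat_l; [auto | apply Rmult_le_compat_l; lra]. }
      apply Rmult_le_compat_l; auto. nra. }
    assert (0 <= M / rho * q ^ k) by (apply Rmult_le_pos; [apply Rdiv_le_0_compat|]; lra).
    replace (M / rho * (INR (S k) ^ 2 * q ^ k)) with (INR (S k) * (INR (S k) * (M / rho * q ^ k))) by ring.
    rewrite Rmult_assoc. apply Rmult_le_compat_l; [lra|]. nra.
  - apply (ex_series_scal_l (K := R_AbsRing) (V := R_NormedModule)), ex_series_sq_geom, Hq.
Qed.

Lemma is_series_pseries_remainder (z y d : C) : Cmod z < R0 -> Cmod y < R0 ->
  is_series (fun k => (RtoC (INR (S k)) * a (S k) * z ^ k)%C) d ->
  is_series (fun k => (a k * pow_remainder y z k)%C) (f y - f z - (y - z) * d)%C.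
Proof.
  intros Hz Hy Hd.
  assert (Hd' : is_series (fun k => (a k * (RtoC (INR k) * z ^ (pred k)))%C) d).
  { apply is_series_decr_1.
    match goal with |- is_series _ ?l => replace l with d end.
    - eapply is_series_ext; [|exact Hd]. intros k.
      change ((RtoC (INR (S k)) * a (S k) * z ^ k)%C
              = (a (S k) * (RtoC (INR (S k)) * z ^ pred (S k)))%C).
      simpl pred. ring.
    - change (d = d + - (a 0%nat * (RtoC 0 * z ^ 0)))%C. ring. }
  assert (H := is_series_minus _ _ _ _ (is_series_minus _ _ _ _ (Hf y Hy) (Hf z Hz))
                 (is_series_scal (y - z)%C _ _ Hd')).
  eapply is_series_ext; [|exact H]. intros k.
  change ((a k * y ^ k - a k * z ^ k) - (y - z) * (a k * (RtoC (INR k) * z ^ pred k))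
          = a k * pow_remainder y z k)%C.
  unfold pow_remainder. ring.
Qed.

Lemma pseries_remainder_bound (z y d : C) (rho M q SQ : R) :
  0 < rho -> Cmod z < R0 -> Cmod y < R0 -> Cmod z <= rho -> Cmod y <= rho ->
  0 <= M -> 0 <= q < 1 -> (forall k, Cmod (a k) * rho ^ k <= M * q ^ k) ->
  is_series (fun k => INR (S k) ^ 2 * q ^ k) SQ ->
  is_series (fun k => (RtoC (INR (S k)) * a (S k) * z ^ k)%C) d ->
  Cmod (f y - f z - (y - z) * d)%C <= M * SQ / rho ^ 2 * Cmod (y - z)%C ^ 2.
Proof.
  intros Hrho Hz Hy Hzr Hyr HM Hq Hb HSQ Hd.
  apply is_series_Cmod_le with (1 := is_series_pseries_remainder z y d Hz Hy Hd). intros n.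
  eapply Rle_trans; [apply Cmod_csum_le|].
  apply Rle_trans
    with (rsum (fun k => M * Cmod (y - z)%C ^ 2 / rho ^ 2 * (INR (S k) ^ 2 * q ^ k)) n).
  - apply rsum_le. intros k. rewrite Cmod_mult.
    apply Cmod_coef_pow_remainder_le; auto; [apply Cmod_ge_0 | lra].
  - rewrite rsum_scal.
    replace (M * SQ / rho ^ 2 * Cmod (y - z)%C ^ 2)
      with (M * Cmod (y - z)%C ^ 2 / rho ^ 2 * SQ) by (field; lra).
    apply Rmult_le_compat_l.
    + apply Rmult_le_pos; [apply Rmult_le_pos; [exact HM | apply pow2_ge_0]|].
      apply Rlt_le, Rinv_0_lt_compat, pow_lt, Hrho.
    + apply rsum_le_series; [|exact HSQ].
      intros k. apply Rmult_le_pos; [apply pow2_ge_0 | apply pow_le; lra].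
Qed.

Lemma pseries_derive (z : C) : Cmod z < R0 ->
  exists d, is_series (fun k => (RtoC (INR (S k)) * a (S k) * z ^ k)%C) d /\ is_derive f z d.
Proof.
  intros Hz. pose proof (Cmod_ge_0 z) as Hz0.
  set (rho := (Cmod z + R0) / 2).
  destruct (coef_geom_bound a R0 rho ltac:(unfold rho; lra)
              (fun w Hw => ex_intro _ (f w) (Hf w Hw))) as (M & q & HM & Hq & Hb).
  destruct (ex_series_derived_pseries z rho M q ltac:(unfold rho; lra) ltac:(unfold rho; lra) HM Hq Hb)
    as [d Hd].
  destruct (ex_series_sq_geom q Hq) as [SQ HSQ].
  exists d. split; [exact Hd|].
  apply (is_derive_of_remainder_bound f z d (M * SQ / rho ^ 2) (rho - Cmod z)); [unfold rho; lra|].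
  intros y Hy.
  assert (Hyr : Cmod y <= rho).
  { pose proof (Cmod_triangle (y - z) z)%C as H. replace (y - z + z)%C with y in H by ring. lra. }
  apply (pseries_remainder_bound z y d rho M q SQ); auto; unfold rho in *; lra.
Qed.

End PowerSeriesDerivative.

(** * Discrete averages over roots of unity *)

Definition root_unity (N : nat) : C := (cos (2 * PI / INR N), sin (2 * PI / INR N)).

Lemma root_unity_pow N m :
  (root_unity N ^ m)%C = (cos (2 * PI * INR m / INR N), sin (2 * PI * INR m / INR N)).
Proof.
  induction m as [|m IH].
  - simpl. replace (2 * PI * 0 / INR N) with 0 by (unfold Rdiv; ring).
    rewrite cos_0, sin_0. reflexivity.
  - rewrite Cpow_S, IH.
    replace (2 * PI * INR (S m) / INR N) with (2 * PI / INR N + 2 * PI * INR m / INR N)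
      by (rewrite S_INR; unfold Rdiv; ring).
    rewrite cos_plus, sin_plus. unfold root_unity, Cmult. simpl. f_equal; ring.
Qed.

Lemma Cmod_root_unity_pow N m : Cmod (root_unity N ^ m)%C = 1.
Proof.
  rewrite root_unity_pow. unfold Cmod. simpl.
  pose proof (sin2_cos2 (2 * PI * INR m / INR N)) as H. unfold Rsqr in H.
  replace (cos (2 * PI * INR m / INR N) * (cos (2 * PI * INR m / INR N) * 1)
           + sin (2 * PI * INR m / INR N) * (sin (2 * PI * INR m / INR N) * 1)) with 1 by lra.
  apply sqrt_1.
Qed.

Lemma root_unity_pow_N N : (0 < N)%nat -> (root_unity N ^ N)%C = 1.
Proof.
  intros HN. rewrite root_unity_pow.
  replace (2 * PI * INR N / INR N) with (2 * PI) by (field; apply not_0_INR; lia).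
  rewrite cos_2PI, sin_2PI. reflexivity.
Qed.

Lemma root_unity_pow_mul_N N j : (0 < N)%nat -> ((root_unity N ^ j) ^ N)%C = 1.
Proof.
  intros HN. rewrite <- Cpow_mult_r, Nat.mul_comm, Cpow_mult_r, root_unity_pow_N by exact HN.
  apply Cpow_1_l.
Qed.

Lemma root_unity_pow_neq1 N s : (0 < s < N)%nat -> (root_unity N ^ s)%C <> 1.
Proof.
  intros Hs E. rewrite root_unity_pow in E. injection E as Ecos _.
  set (x := 2 * PI * INR s / INR N) in Ecos.
  assert (Hx : 0 < x / 2 < PI).
  { assert (0 < INR s) by (apply lt_0_INR; lia).
    assert (INR s < INR N) by (apply lt_INR; lia).
    pose proof PI_RGT_0. unfold x. split.
    - apply Rdiv_lt_0_compat; [apply Rdiv_lt_0_compat|]; nra.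
    - apply Rlt_div_l; [lra|]. apply Rlt_div_l; nra. }
  replace x with (2 * (x / 2)) in Ecos by field.
  rewrite cos_2a_sin in Ecos.
  pose proof (sin_gt_0 _ (proj1 Hx) (proj2 Hx)). nra.
Qed.

Definition root_power_sum (N m : nat) : C := csum (fun j => root_unity N ^ (j * m))%C N.

Lemma root_power_sum_eq N q s : (0 < N)%nat -> (s < N)%nat ->
  root_power_sum N (q * N + s) = if Nat.eqb s 0 then RtoC (INR N) else RtoC 0.
Proof.
  intros HN Hs. unfold root_power_sum.
  set (x := (root_unity N ^ s)%C).
  rewrite (csum_ext _ (fun j => (x ^ j)%C)).
  2:{ intros j _. unfold x.
      rewrite Nat.mul_comm, Cpow_mult_r, Cpow_add_r, (Nat.mul_comm q N), Cpow_mult_r,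
        root_unity_pow_N, Cpow_1_l, Cmult_1_l by exact HN.
      reflexivity. }
  destruct (Nat.eqb_spec s 0) as [->|Hne].
  - rewrite (csum_ext _ (fun _ => RtoC 1)) by (intros; apply Cpow_1_l).
    rewrite csum_const. ring.
  - assert (Hx : (x - 1)%C <> RtoC 0).
    { intros E. apply (root_unity_pow_neq1 N s); [lia|]. fold x.
      replace x with ((x - 1) + 1)%C by ring. rewrite E. ring. }
    assert (Hg := csum_geom x N).
    assert (HxN : (x ^ N)%C = 1) by (apply root_unity_pow_mul_N, HN).
    rewrite HxN in Hg.
    replace (csum (fun j => (x ^ j)%C) N)
      with (/ (x - 1) * ((x - 1) * csum (fun j => (x ^ j)%C) N))%C by (field; auto).
    rewrite Hg. ring.
Qed.

Lemma root_power_sum_shift N i l k : (i <= 2)%nat -> (l <= 2)%nat -> (k + 3 <= N)%nat ->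
  root_power_sum N (i + k + (N - 1) * l) = if Nat.eqb (i + k) l then RtoC (INR N) else RtoC 0.
Proof.
  intros Hi Hl Hk.
  assert (H : exists q s, (i + k + (N - 1) * l = q * N + s)%nat /\ (s < N)%nat
                          /\ (s = 0 <-> i + k = l)%nat).
  { assert (l = 0 \/ l = 1 \/ l = 2)%nat as [ -> | [ -> | -> ] ] by lia.
    - exists 0%nat, (i + k)%nat. lia.
    - destruct (Nat.le_gt_cases 1 (i + k)).
      + exists 1%nat, (i + k - 1)%nat. lia.
      + exists 0%nat, (N - 1)%nat. lia.
    - destruct (Nat.le_gt_cases 2 (i + k)).
      + exists 2%nat, (i + k - 2)%nat. lia.
      + exists 1%nat, (N + i + k - 2)%nat. lia. }
  destruct H as (q & s & E & Hs & Hiff).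
  rewrite E, root_power_sum_eq by lia.
  destruct (Nat.eqb_spec s 0), (Nat.eqb_spec (i + k) l); auto; tauto.
Qed.

Lemma Cconj_root_unity_pow N j : (0 < N)%nat ->
  Cconj (root_unity N ^ j) = (root_unity N ^ (j * (N - 1)))%C.
Proof.
  intros HN. set (z := (root_unity N ^ j)%C).
  assert (H1 : (z * Cconj z)%C = 1).
  { rewrite <- Cmod2_conj. unfold z. rewrite Cmod_root_unity_pow. apply injective_projections; simpl; ring. }
  assert (H2 : (z * z ^ (N - 1))%C = 1).
  { rewrite <- Cpow_S. replace (S (N - 1)) with N by lia. apply root_unity_pow_mul_N, HN. }
  assert (Hz : z <> RtoC 0).
  { intros E. pose proof (Cmod_root_unity_pow N j) as Hm. fold z in Hm.
    rewrite E, Cmod_0 in Hm. lra. }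
  rewrite Cpow_mult_r. fold z.
  replace (Cconj z) with (/ z * (z * Cconj z))%C by (field; auto).
  rewrite H1, <- H2. field. auto.
Qed.

(** For [P(z) = u0 + u1 z + u2 z^2] and [|z| = 1],
    [|P(z)|^2 = autocorr 0 + sum_(k = 1, 2) (autocorr k * z^-k + conj (autocorr k) * z^k)],
    so the discrete moments of [|P|^2] pick out the [autocorr k]. *)
Definition quad_poly (u0 u1 u2 z : C) : C := (u0 + u1 * z + u2 * z ^ 2)%C.

Definition autocorr (u0 u1 u2 : C) (k : nat) : C :=
  match k with
  | 0%nat => (u0 * Cconj u0 + u1 * Cconj u1 + u2 * Cconj u2)%C
  | 1%nat => (u0 * Cconj u1 + u1 * Cconj u2)%C
  | 2%nat => (u0 * Cconj u2)%C
  | _ => RtoC 0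
  end.

Definition root_moment (N : nat) (u0 u1 u2 : C) (k : nat) : C :=
  csum (fun j => quad_poly u0 u1 u2 (root_unity N ^ j) * Cconj (quad_poly u0 u1 u2 (root_unity N ^ j))
                 * (root_unity N ^ j) ^ k)%C N.

Lemma root_moment_eq N u0 u1 u2 k : (0 < N)%nat -> (k + 3 <= N)%nat ->
  root_moment N u0 u1 u2 k = (RtoC (INR N) * autocorr u0 u1 u2 k)%C.
Proof.
  intros HN Hk. unfold root_moment.
  set (g := fun i l j => (root_unity N ^ (j * (i + k + (N - 1) * l)))%C).
  rewrite (csum_ext _ (fun j =>
     u0 * Cconj u0 * g O O j + u0 * Cconj u1 * g O 1%nat j + u0 * Cconj u2 * g O 2%nat j +
     u1 * Cconj u0 * g 1%nat O j + u1 * Cconj u1 * g 1%nat 1%nat j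
     + u1 * Cconj u2 * g 1%nat 2%nat j + u2 * Cconj u0 * g 2%nat O j
     + u2 * Cconj u1 * g 2%nat 1%nat j + u2 * Cconj u2 * g 2%nat 2%nat j)%C).
  2:{ intros j _. unfold g, quad_poly.
      assert (Hs : forall i l, (root_unity N ^ (j * (i + k + (N - 1) * l)))%C =
                 ((root_unity N ^ j) ^ i * (root_unity N ^ j) ^ k
                  * (Cconj (root_unity N ^ j)) ^ l)%C).
      { intros i l. rewrite Cconj_root_unity_pow by exact HN.
        rewrite <- !Cpow_mult_r, <- !Cpow_add_r. f_equal. lia. }
      rewrite !Hs, !Cplus_conj, !Cmult_conj, !Cpow_conj.
      set (c := Cconj (root_unity N ^ j)). set (z := (root_unity N ^ j)%C). simpl Cpow. ring. }
  rewrite !csum_plus, !csum_scal. unfold g.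
  fold (root_power_sum N (0 + k + (N - 1) * 0)) (root_power_sum N (0 + k + (N - 1) * 1))
    (root_power_sum N (0 + k + (N - 1) * 2)) (root_power_sum N (1 + k + (N - 1) * 0))
    (root_power_sum N (1 + k + (N - 1) * 1)) (root_power_sum N (1 + k + (N - 1) * 2))
    (root_power_sum N (2 + k + (N - 1) * 0)) (root_power_sum N (2 + k + (N - 1) * 1))
    (root_power_sum N (2 + k + (N - 1) * 2)).
  rewrite !root_power_sum_shift by lia.
  destruct k as [|[|[|k]]]; simpl Nat.eqb; simpl autocorr; cbv iota; ring.
Qed.

Lemma Cmod_quad_le u0 u1 u2 z : Cmod z = 1 ->
  Cmod (quad_poly u0 u1 u2 z) <= Cmod u0 + Cmod u1 + Cmod u2.
Proof.
  intros Hz. unfold quad_poly.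
  eapply Rle_trans; [apply Cmod_triangle|].
  eapply Rle_trans; [apply Rplus_le_compat_r, Cmod_triangle|].
  rewrite !Cmod_mult, Cmod_pow, Hz. simpl. lra.
Qed.

Lemma Cmod_root_moment_le N u0 u1 u2 k :
  Cmod (root_moment N u0 u1 u2 k) <= INR N * (Cmod u0 + Cmod u1 + Cmod u2) ^ 2.
Proof.
  unfold root_moment. eapply Rle_trans; [apply Cmod_csum_le|].
  rewrite <- rsum_const. apply rsum_le. intros j.
  rewrite !Cmod_mult, Cmod_conj, Cmod_pow, !Cmod_root_unity_pow, pow1, Rmult_1_r.
  pose proof (Cmod_quad_le u0 u1 u2 _ (Cmod_root_unity_pow N j)).
  pose proof (Cmod_ge_0 (quad_poly u0 u1 u2 (root_unity N ^ j))). simpl. nra.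
Qed.

Lemma Cmod_autocorr_le u0 u1 u2 k :
  Cmod (autocorr u0 u1 u2 k) <= (Cmod u0 + Cmod u1 + Cmod u2) ^ 2.
Proof.
  pose proof (Cmod_ge_0 u0). pose proof (Cmod_ge_0 u1). pose proof (Cmod_ge_0 u2).
  destruct k as [|[|[|k]]]; simpl autocorr.
  - eapply Rle_trans; [apply Cmod_triangle|].
    eapply Rle_trans; [apply Rplus_le_compat_r, Cmod_triangle|].
    rewrite !Cmod_mult, !Cmod_conj. nra.
  - eapply Rle_trans; [apply Cmod_triangle|]. rewrite !Cmod_mult, !Cmod_conj. nra.
  - rewrite !Cmod_mult, !Cmod_conj. nra.
  - rewrite Cmod_0. nra.
Qed.

(** * The Carathéodory coefficient inequality *)

Lemma rsum_tail_bound (D : nat -> C) (be : nat -> R) (Sb c : R) m n :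
  (forall k, 0 <= be k) -> is_series be Sb -> 0 <= c ->
  (forall k, (k < m)%nat -> D k = RtoC 0) -> (forall k, Cmod (D k) <= c * be k) ->
  rsum (fun k => Cmod (D k)) n <= c * (Sb - rsum be m).
Proof.
  intros Hbe Hs Hc HD0 HD.
  assert (Hz : forall n, (n <= m)%nat -> rsum (fun k => Cmod (D k)) n = 0).
  { intros n' Hn'. induction n' as [|n' IH]; simpl; auto.
    rewrite IH, HD0, Cmod_0 by lia. ring. }
  assert (Hk : forall k, rsum (fun k => Cmod (D k)) (k + m) <= c * (rsum be (k + m) - rsum be m)).
  { induction k as [|k IH]; simpl.
    - rewrite Hz by lia. lra.
    - specialize (HD (k + m)%nat). specialize (Hbe (k + m)%nat). nra. }
  destruct (Nat.le_gt_cases n m) as [Hn|Hn].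
  - rewrite Hz by exact Hn. pose proof (rsum_le_series be Sb m Hbe Hs). nra.
  - replace n with ((n - m) + m)%nat by lia.
    eapply Rle_trans; [apply Hk|]. apply Rmult_le_compat_l; auto.
    pose proof (rsum_le_series be Sb (n - m + m) Hbe Hs). lra.
Qed.

Lemma re_minus (u v : C) : Re (u - v)%C = Re u - Re v.
Proof. destruct u, v. unfold Cminus, Cplus, Copp, Re. simpl. ring. Qed.

Definition toeplitz_form (b : nat -> C) (u0 u1 u2 : C) (r : R) : C :=
  (autocorr u0 u1 u2 0 * b 0%nat + autocorr u0 u1 u2 1 * b 1%nat * RtoC r
   + autocorr u0 u1 u2 2 * b 2%nat * RtoC (r ^ 2))%C.

Section Caratheodory.

Variables (b : nat -> C) (p : C -> C) (u0 u1 u2 : C).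
Hypothesis Hp : forall w, Cmod w < 1 -> is_series (fun k => (b k * w ^ k)%C) (p w).
Hypothesis Hpos : forall w, Cmod w < 1 -> 0 < Re (p w).

Lemma ex_series_Cmod_coef (r : R) : 0 <= r < 1 -> ex_series (fun k => Cmod (b k) * r ^ k).
Proof.
  intros Hr.
  destruct (coef_geom_bound b 1 r Hr (fun w Hw => ex_intro _ (p w) (Hp w Hw)))
    as (M & q & HM & Hq & Hb).
  apply (ex_series_le (K := R_AbsRing) (V := R_CompleteNormedModule)) with (fun k => M * q ^ k).
  - intros k. change norm with Rabs.
    rewrite Rabs_pos_eq by (apply Rmult_le_pos; [apply Cmod_ge_0 | apply pow_le; lra]).
    apply Hb.
  - apply (ex_series_scal_l (K := R_AbsRing) (V := R_NormedModule)).
    exists (/ (1 - q)). apply is_series_geom. rewrite Rabs_pos_eq; lra.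
Qed.

(** The discrete analogue of [∫ |P(e^it)|^2 p(r e^it) dt], sampled at the [N]-th roots of unity. *)
Definition root_average (N : nat) (r : R) : C :=
  csum (fun j => quad_poly u0 u1 u2 (root_unity N ^ j) * Cconj (quad_poly u0 u1 u2 (root_unity N ^ j))
                 * p (RtoC r * root_unity N ^ j))%C N.

Lemma re_root_average_nonneg N r : 0 <= r < 1 -> 0 <= Re (root_average N r).
Proof.
  intros Hr. unfold root_average. rewrite re_csum. apply rsum_nonneg. intros j.
  rewrite <- Cmod2_conj, re_scal_l. apply Rmult_le_pos; [apply pow2_ge_0|].
  apply Rlt_le, Hpos. rewrite Cmod_mult, Cmod_root_unity_pow, Cmod_R, Rabs_pos_eq; lra.
Qed.

Lemma root_average_series N r : 0 <= r < 1 ->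
  is_series (fun k => (b k * RtoC (r ^ k) * root_moment N u0 u1 u2 k)%C) (root_average N r).
Proof.
  intros Hr.
  set (V := fun j => (quad_poly u0 u1 u2 (root_unity N ^ j)
                      * Cconj (quad_poly u0 u1 u2 (root_unity N ^ j)))%C).
  assert (H := is_series_csum (fun j k => (V j * (b k * (RtoC r * root_unity N ^ j) ^ k))%C)
                 (fun j => (V j * p (RtoC r * root_unity N ^ j))%C) N).
  eapply is_series_ext; [|apply H].
  - intros k. unfold root_moment. rewrite <- csum_scal. apply csum_ext. intros j _.
    unfold V. rewrite Cpow_mult_l, RtoC_pow. ring.
  - intros j. apply (is_series_scal (K := C_AbsRing) (V := C_NormedModule)), Hp.
    rewrite Cmod_mult, Cmod_root_unity_pow, Cmod_R, Rabs_pos_eq; lra.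
Qed.

Lemma root_average_approx N r Sb : 0 <= r < 1 -> (0 < N)%nat ->
  is_series (fun k => Cmod (b k) * r ^ k) Sb ->
  Cmod (root_average N r - RtoC (INR N) * toeplitz_form b u0 u1 u2 r)%C
  <= 2 * INR N * (Cmod u0 + Cmod u1 + Cmod u2) ^ 2 * (Sb - rsum (fun k => Cmod (b k) * r ^ k) (N - 2)).
Proof.
  intros Hr HN HSb.
  set (K := (Cmod u0 + Cmod u1 + Cmod u2) ^ 2).
  set (D := fun k => (b k * RtoC (r ^ k)
                      * (root_moment N u0 u1 u2 k - RtoC (INR N) * autocorr u0 u1 u2 k))%C).
  assert (Hfin : is_series (fun k => (b k * RtoC (r ^ k) * (RtoC (INR N) * autocorr u0 u1 u2 k)))%C
                   (RtoC (INR N) * toeplitz_form b u0 u1 u2 r)%C).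
  { replace (RtoC (INR N) * toeplitz_form b u0 u1 u2 r)%C
      with (csum (fun k => (b k * RtoC (r ^ k) * (RtoC (INR N) * autocorr u0 u1 u2 k)))%C 3).
    - apply is_series_finite. intros [|[|[|k]]] Hk; try lia. simpl autocorr. ring.
    - unfold toeplitz_form. simpl csum. simpl autocorr. simpl pow. rewrite ?RtoC_mult. ring. }
  assert (HD : is_series D (root_average N r - RtoC (INR N) * toeplitz_form b u0 u1 u2 r)%C).
  { eapply is_series_ext; [|exact (is_series_minus _ _ _ _ (root_average_series N r Hr) Hfin)].
    intros k. unfold D.
    change (b k * RtoC (r ^ k) * root_moment N u0 u1 u2 k
            - b k * RtoC (r ^ k) * (RtoC (INR N) * autocorr u0 u1 u2 k)
            = b k * RtoC (r ^ k) * (root_moment N u0 u1 u2 k - RtoC (INR N) * autocorr u0 u1 u2 k))%C.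
    ring. }
  apply is_series_Cmod_le with (1 := HD). intros n.
  eapply Rle_trans; [apply Cmod_csum_le|].
  apply rsum_tail_bound; auto.
  - intros k. apply Rmult_le_pos; [apply Cmod_ge_0 | apply pow_le; lra].
  - pose proof (pos_INR N). unfold K. apply Rmult_le_pos; [lra | apply pow2_ge_0].
  - intros k Hk. unfold D. rewrite root_moment_eq by lia. ring.
  - intros k. unfold D. rewrite !Cmod_mult, Cmod_R, Rabs_pos_eq by (apply pow_le; lra).
    assert (E : Cmod (root_moment N u0 u1 u2 k - RtoC (INR N) * autocorr u0 u1 u2 k)%C
                <= 2 * INR N * K).
    { unfold Cminus. eapply Rle_trans; [apply Cmod_triangle|].
      rewrite Cmod_opp, Cmod_mult, Cmod_R, Rabs_pos_eq by apply pos_INR.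
      pose proof (Cmod_root_moment_le N u0 u1 u2 k). pose proof (Cmod_autocorr_le u0 u1 u2 k).
      pose proof (pos_INR N). fold K in H, H0. nra. }
    assert (0 <= Cmod (b k) * r ^ k) by (apply Rmult_le_pos; [apply Cmod_ge_0 | apply pow_le; lra]).
    pose proof (Cmod_ge_0 (root_moment N u0 u1 u2 k - RtoC (INR N) * autocorr u0 u1 u2 k)%C).
    nra.
Qed.

Lemma re_toeplitz_form_nonneg r : 0 <= r < 1 -> 0 <= Re (toeplitz_form b u0 u1 u2 r).
Proof.
  intros Hr.
  destruct (ex_series_Cmod_coef r Hr) as [Sb HSb].
  set (K := (Cmod u0 + Cmod u1 + Cmod u2) ^ 2).
  set (be := fun k => Cmod (b k) * r ^ k).
  assert (Hlow : forall n, - (2 * K) * (Sb - sum_n be n) <= Re (toeplitz_form b u0 u1 u2 r)).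
  { intros n. set (N := (n + 3)%nat). set (Q := toeplitz_form b u0 u1 u2 r).
    assert (HN : 0 < INR N) by (apply lt_0_INR; unfold N; lia).
    pose proof (root_average_approx N r Sb Hr ltac:(unfold N; lia) HSb) as Happ.
    replace (N - 2)%nat with (S n) in Happ by (unfold N; lia).
    rewrite <- sum_n_rsum in Happ. fold K be Q in Happ.
    pose proof (re_root_average_nonneg N r Hr).
    pose proof (re_le_Cmod (root_average N r - RtoC (INR N) * Q)%C) as Hre.
    rewrite re_minus, re_scal_l in Hre.
    pose proof (Rle_abs (Re (root_average N r) - INR N * Re Q)).
    apply Rmult_le_reg_l with (INR N); [exact HN|]. nra. }
  assert (Hlim : is_lim_seq (fun n => - (2 * K) * (Sb - sum_n be n)) (- (2 * K) * (Sb - Sb))).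
  { apply is_lim_seq_mult'; [apply is_lim_seq_const|].
    apply is_lim_seq_minus'; [apply is_lim_seq_const | exact HSb]. }
  replace (- (2 * K) * (Sb - Sb)) with 0 in Hlim by ring.
  apply (is_lim_seq_le _ (fun _ => Re (toeplitz_form b u0 u1 u2 r)) 0
           (Re (toeplitz_form b u0 u1 u2 r)) Hlow Hlim (is_lim_seq_const _)).
Qed.

End Caratheodory.

Lemma nonneg_at_1_of_quadratic (A B Cc : R) :
  (forall r, 0 <= r < 1 -> 0 <= A + B * r + Cc * r ^ 2) -> 0 <= A + B + Cc.
Proof.
  intros H.
  set (r := fun n => 1 - / INR (S n)).
  assert (Hr : forall n, 0 <= r n < 1).
  { intros n. assert (1 <= INR (S n)) by (apply (le_INR 1); lia).
    assert (0 < / INR (S n) <= 1).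
    { split; [apply Rinv_0_lt_compat; lra|]. rewrite <- Rinv_1. apply Rinv_le_contravar; lra. }
    unfold r. lra. }
  assert (Hr1 : is_lim_seq r (1 - 0)).
  { apply is_lim_seq_minus'; [apply is_lim_seq_const | apply is_lim_seq_inv_Sn]. }
  assert (Hl : is_lim_seq (fun n => A + B * r n + Cc * r n ^ 2) (A + B * (1 - 0) + Cc * (1 - 0) ^ 2)).
  { apply is_lim_seq_plus'; [apply is_lim_seq_plus'|].
    - apply is_lim_seq_const.
    - apply is_lim_seq_mult'; [apply is_lim_seq_const | exact Hr1].
    - apply is_lim_seq_mult'; [apply is_lim_seq_const|]. simpl.
      apply is_lim_seq_mult'; [exact Hr1|].
      apply is_lim_seq_mult'; [exact Hr1 | apply is_lim_seq_const]. }
  replace (A + B * (1 - 0) + Cc * (1 - 0) ^ 2) with (A + B + Cc) in Hl by ring.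
  apply (is_lim_seq_le (fun _ => 0) _ 0 (A + B + Cc) (fun n => H (r n) (Hr n))
           (is_lim_seq_const 0) Hl).
Qed.

Lemma re_toeplitz_form_nonneg_1 (b : nat -> C) (p : C -> C) (u0 u1 u2 : C) :
  (forall w, Cmod w < 1 -> is_series (fun k => (b k * w ^ k)%C) (p w)) ->
  (forall w, Cmod w < 1 -> 0 < Re (p w)) ->
  0 <= Re (toeplitz_form b u0 u1 u2 1).
Proof.
  intros Hp Hpos.
  assert (E : forall r, Re (toeplitz_form b u0 u1 u2 r) =
     Re (autocorr u0 u1 u2 0 * b 0%nat) + Re (autocorr u0 u1 u2 1 * b 1%nat) * r
     + Re (autocorr u0 u1 u2 2 * b 2%nat) * r ^ 2).
  { intros r. unfold toeplitz_form. rewrite !re_plus, <- !re_scal_r. reflexivity. }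
  rewrite E, pow1, Rmult_1_r, Rmult_1_r.
  apply nonneg_at_1_of_quadratic. intros r Hr. rewrite <- E.
  apply (re_toeplitz_form_nonneg b p); auto.
Qed.

Lemma re_toeplitz_form_choice (b : nat -> C) (w : C) :
  b 0%nat = RtoC 1 -> Cmod w = 1 ->
  Re (toeplitz_form b w (- (w * b 1%nat + Cconj (b 1%nat)) / 2)%C (RtoC 1) 1) =
  2 - Cmod (b 1%nat) ^ 2 / 2 + Re (w * (b 2%nat - b 1%nat * b 1%nat / 2))%C.
Proof.
  intros Hb0 Hw.
  rewrite Cmod2_alt.
  assert (Hw2 : Re w ^ 2 + Im w ^ 2 = 1) by (rewrite <- Cmod2_alt, Hw; ring).
  unfold toeplitz_form, autocorr. rewrite Hb0.
  destruct w as [x y]. destruct (b 1%nat) as [s t]. destruct (b 2%nat) as [s' t'].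
  simpl in Hw2 |- *.
  unfold Cconj, Cmult, Cplus, Cdiv, Copp, Cminus, Cinv. simpl.
  field_simplify; try lra.
  replace (y ^ 2) with (1 - x ^ 2) by lra. field.
Qed.

Lemma Cmod_le_of_re_mul (W : C) (c : R) :
  (forall w, Cmod w = 1 -> 0 <= c + Re (w * W)%C) -> Cmod W <= c.
Proof.
  intros H.
  destruct (Ceq_dec W (RtoC 0)) as [E|E].
  - subst. specialize (H (RtoC 1) Cmod_1).
    rewrite Cmod_0, Cmult_0_r in *. simpl in H. lra.
  - assert (HW : 0 < Cmod W) by (apply Cmod_gt_0; auto).
    assert (HWn : RtoC (Cmod W) <> RtoC 0) by (apply RtoC_neq0, Rgt_not_eq; lra).
    specialize (H (- Cconj W / RtoC (Cmod W))%C).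
    assert (E1 : Cmod (- Cconj W / RtoC (Cmod W))%C = 1).
    { rewrite Cmod_div, Cmod_opp, Cmod_conj, Cmod_R, Rabs_pos_eq by (auto; lra). field. lra. }
    assert (E2 : (- Cconj W / RtoC (Cmod W) * W)%C = RtoC (- Cmod W)).
    { replace (- Cconj W / RtoC (Cmod W) * W)%C with (- (W * Cconj W) / RtoC (Cmod W))%C
        by (field; auto).
      rewrite <- Cmod2_conj, RtoC_pow, RtoC_opp. field. auto. }
    specialize (H E1). rewrite E2 in H. simpl in H. lra.
Qed.

Lemma caratheodory_coef_bound (b : nat -> C) (p : C -> C) :
  (forall w, Cmod w < 1 -> is_series (fun k => (b k * w ^ k)%C) (p w)) ->
  (forall w, Cmod w < 1 -> 0 < Re (p w)) -> b 0%nat = RtoC 1 ->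
  Cmod (b 2%nat - b 1%nat * b 1%nat / 2)%C <= 2 - Cmod (b 1%nat) ^ 2 / 2.
Proof.
  intros Hp Hpos Hb0. apply Cmod_le_of_re_mul. intros w Hw.
  rewrite <- re_toeplitz_form_choice by auto.
  apply (re_toeplitz_form_nonneg_1 b p); auto.
Qed.

(** * The two-sided bound *)

Lemma bounded_turning_derivative (f : C -> C) (a : nat -> C) : bounded_turning f a ->
  exists p : C -> C,
    (forall w, Cmod w < 1 ->
       is_series (fun k => (RtoC (INR (S k)) * a (S k) * w ^ k)%C) (p w)) /\
    (forall w, Cmod w < 1 -> 0 < Re (p w)).
Proof.
  intros (_ & _ & Hser & Hder).
  assert (Hf : forall w, Cmod w < 1 -> is_series (fun k => (a k * w ^ k)%C) (f w))
    by (intros w Hw; apply is_pseries_C, Hser, Hw).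
  exists (C_derive f). split.
  - intros w Hw. destruct (pseries_derive a f 1 Hf w Hw) as [d [Hd Hdf]].
    rewrite (is_C_derive_unique _ _ _ Hdf). exact Hd.
  - intros w Hw. destruct (Hder w Hw) as [l [Hl Hre]].
    rewrite (is_C_derive_unique _ _ _ Hl). exact Hre.
Qed.

Lemma Cmod_sub_le (u v : C) : Cmod v - Cmod u <= Cmod (u + v)%C.
Proof.
  pose proof (Cmod_triangle (u + v) (- u))%C as H. rewrite Cmod_opp in H.
  replace (u + v + - u)%C with v in H by ring. lra.
Qed.

(** Used with [X = |f''(0)|] and [Y = |b2 - b1^2/2|], where [|Γ1| = X/4] and [|Γ2|] lies
    within [Y/6] of [5 X^2/48]. *)
Lemma Gamma_diff_bound_real (X Y G1 G2 : R) : 0 <= X -> 0 <= Y -> Y <= 2 - X ^ 2 / 2 ->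
  G1 = X / 4 -> 0 <= G2 -> G2 <= Y / 6 + 5 * X ^ 2 / 48 -> 5 * X ^ 2 / 48 - Y / 6 <= G2 ->
  -(1/3) <= G2 - G1 <= 1/3.
Proof.
  intros HX HY HXY HG1 HG2 Hu Hl. subst G1. split.
  - destruct (Rle_lt_dec X (4/3)); nra.
  - nra.
Qed.

Lemma Gamma_diff_bound (f : C -> C) (a : nat -> C) : bounded_turning f a ->
  -(1/3) <= Cmod (Gamma2 a) - Cmod (Gamma1 a) <= 1/3.
Proof.
  intros Hbt. destruct (bounded_turning_derivative f a Hbt) as [p [Hp Hpos]].
  set (b1 := (RtoC 2 * a 2%nat)%C). set (b2 := (RtoC 3 * a 3%nat)%C).
  set (W := (b2 - b1 * b1 / 2)%C).
  assert (HW : Cmod W <= 2 - Cmod b1 ^ 2 / 2).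
  { assert (Hb0 : (RtoC (INR 1) * a 1%nat)%C = RtoC 1).
    { destruct Hbt as (_ & Ha1 & _). rewrite Ha1. simpl. ring. }
    pose proof (caratheodory_coef_bound _ p Hp Hpos Hb0) as H.
    cbv beta in H. replace (INR 2) with 2 in H by (simpl; ring).
    replace (INR 3) with 3 in H by (simpl; ring).
    exact H. }
  assert (H4 : RtoC 4 <> RtoC 0) by (apply RtoC_neq0, Rgt_not_eq; lra).
  assert (H6 : RtoC 6 <> RtoC 0) by (apply RtoC_neq0, Rgt_not_eq; lra).
  assert (E1 : Gamma1 a = (- b1 / RtoC 4)%C) by (unfold Gamma1, b1; field; exact H4).
  assert (E2 : Gamma2 a = (- W / RtoC 6 + RtoC (5 / 48) * (b1 * b1))%C).
  { unfold Gamma2, W, b1, b2. rewrite RtoC_div by lra. field; auto. }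
  assert (CW : Cmod (- W / RtoC 6)%C = Cmod W / 6).
  { rewrite Cmod_div, Cmod_opp, Cmod_R, Rabs_pos_eq by (auto; lra). reflexivity. }
  assert (CB : Cmod (RtoC (5 / 48) * (b1 * b1))%C = 5 * Cmod b1 ^ 2 / 48).
  { rewrite !Cmod_mult, Cmod_R, Rabs_pos_eq by lra. simpl. field. }
  apply (Gamma_diff_bound_real (Cmod b1) (Cmod W)); auto; try apply Cmod_ge_0.
  - rewrite E1, Cmod_div, Cmod_opp, Cmod_R, Rabs_pos_eq by (auto; lra). reflexivity.
  - rewrite E2. eapply Rle_trans; [apply Cmod_triangle|]. rewrite CW, CB. lra.
  - rewrite E2. eapply Rle_trans; [|apply Cmod_sub_le]. rewrite CW, CB. lra.
Qed.

(** * Extremal functions *)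

(** Coefficients of [(1 + z) / (1 - z) = 1 + 2 z + 2 z^2 + ...]. *)
Definition herglotz_coef (k : nat) : C := match k with O => RtoC 1 | S _ => RtoC 2 end.

Lemma herglotz_partial_sum (w : C) n :
  ((1 - w) * csum (fun k => herglotz_coef k * w ^ k)%C (S n) = 1 + w - 2 * w ^ (S n))%C.
Proof.
  induction n as [|n IH].
  - simpl. ring.
  - change (csum (fun k => herglotz_coef k * w ^ k)%C (S (S n)))
      with (csum (fun k => herglotz_coef k * w ^ k)%C (S n) + herglotz_coef (S n) * w ^ (S n))%C.
    rewrite Cmult_plus_distr_l, IH. simpl herglotz_coef. rewrite (Cpow_S w (S n)). ring.
Qed.

Lemma herglotz_series (w : C) : Cmod w < 1 ->
  is_series (fun k => (herglotz_coef k * w ^ k)%C) ((1 + w) / (1 - w))%C.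
Proof.
  intros Hw.
  assert (Hnz : (1 - w)%C <> RtoC 0).
  { intros E. assert (w = RtoC 1) by (replace w with (1 - (1 - w))%C by ring; rewrite E; ring).
    subst. rewrite Cmod_1 in Hw. lra. }
  assert (Hm : 0 < Cmod (1 - w)%C) by (apply Cmod_gt_0; auto).
  apply filterlim_C_of_Cmod_bound with (fun n => 2 / Cmod (1 - w)%C * Cmod w ^ (S n)).
  - assert (H := is_lim_seq_geom (Cmod w) ltac:(rewrite Rabs_pos_eq by apply Cmod_ge_0; auto)).
    apply is_lim_seq_incr_1 in H.
    apply (is_lim_seq_scal_l _ (2 / Cmod (1 - w)%C)) in H. simpl in H.
    rewrite Rmult_0_r in H. exact H.
  - intros n. rewrite sum_n_csum.
    replace (csum (fun k => herglotz_coef k * w ^ k)%C (S n) - (1 + w) / (1 - w))%C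
      with (/ (1 - w) * ((1 - w) * csum (fun k => herglotz_coef k * w ^ k)%C (S n))
            - (1 + w) / (1 - w))%C by (field; auto).
    rewrite herglotz_partial_sum.
    replace (/ (1 - w) * (1 + w - 2 * w ^ S n) - (1 + w) / (1 - w))%C
      with (- (RtoC 2) * w ^ S n / (1 - w))%C by (field; auto).
    rewrite Cmod_div, Cmod_mult, Cmod_opp, Cmod_pow, Cmod_R, Rabs_pos_eq by (auto; lra).
    right. field. lra.
Qed.

Lemma re_herglotz_pos (w : C) : Cmod w < 1 -> 0 < Re ((1 + w) / (1 - w))%C.
Proof.
  intros Hw.
  assert (Hw2 : Re w ^ 2 + Im w ^ 2 < 1).
  { rewrite <- Cmod2_alt. pose proof (Cmod_ge_0 w). nra. }
  destruct w as [x y]. simpl in Hw2.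
  assert (Hd : 0 < (1 - x) ^ 2 + y ^ 2) by nra.
  replace (Re ((1 + (x, y)) / (1 - (x, y)))%C) with ((1 - x ^ 2 - y ^ 2) / ((1 - x) ^ 2 + y ^ 2)).
  - apply Rdiv_lt_0_compat; lra.
  - unfold Cdiv, Cinv, Cmult, Cplus, Cminus, Copp, Re. simpl. field. nra.
Qed.

(** Coefficients of [lam (1 + z)/(1 - z) + (1 - lam) (1 - z)/(1 + z)] and of its primitive
    vanishing at [0]. *)
Definition extremal_deriv_coef (lam : R) (k : nat) : C :=
  (RtoC lam * herglotz_coef k + RtoC (1 - lam) * herglotz_coef k * (-1) ^ k)%C.

Definition extremal_coef (lam : R) (k : nat) : C :=
  match k with O => RtoC 0 | S m => (extremal_deriv_coef lam m / RtoC (INR (S m)))%C end.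

Definition pseries_sum (a : nat -> C) (z : C) : C :=
  epsilon (inhabits (RtoC 0)) (fun l => is_series (fun k => (a k * z ^ k)%C) l).

Lemma Cmod_extremal_coef_le lam k : 0 <= lam <= 1 -> Cmod (extremal_coef lam k) <= 2.
Proof.
  intros Hl. destruct k as [|k]; unfold extremal_coef; cbv iota beta.
  - rewrite Cmod_0. lra.
  - assert (H1 : 1 <= INR (S k)) by (apply (le_INR 1); lia).
    assert (Hh : Cmod (herglotz_coef k) <= 2).
    { destruct k; simpl herglotz_coef; rewrite Cmod_R, Rabs_pos_eq; lra. }
    assert (Hc : Cmod (extremal_deriv_coef lam k) <= 2).
    { unfold extremal_deriv_coef. eapply Rle_trans; [apply Cmod_triangle|].
      rewrite !Cmod_mult, Cmod_pow, !Cmod_R, Rabs_m1, pow1, !Rabs_pos_eq by lra.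
      pose proof (Cmod_ge_0 (herglotz_coef k)). nra. }
    rewrite Cmod_div by (apply RtoC_neq0, not_0_INR; lia).
    rewrite Cmod_R, Rabs_pos_eq by apply pos_INR.
    apply Rle_trans with (Cmod (extremal_deriv_coef lam k)); [|exact Hc].
    apply Rle_div_l; [lra|]. pose proof (Cmod_ge_0 (extremal_deriv_coef lam k)). nra.
Qed.

Lemma extremal_series lam z : 0 <= lam <= 1 -> Cmod z < 1 ->
  is_series (fun k => (extremal_coef lam k * z ^ k)%C) (pseries_sum (extremal_coef lam) z).
Proof.
  intros Hl Hz. unfold pseries_sum. apply epsilon_spec.
  assert (Hex : ex_series (fun k => (extremal_coef lam k * z ^ k)%C)).
  { apply (ex_series_le (K := C_AbsRing) (V := C_CompleteNormedModule)) with (fun k => 2 * Cmod z ^ k).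
    - intros k. change norm with Cmod. rewrite Cmod_mult, Cmod_pow.
      apply Rmult_le_compat_r; [apply pow_le, Cmod_ge_0 | apply Cmod_extremal_coef_le, Hl].
    - apply (ex_series_scal_l (K := R_AbsRing) (V := R_NormedModule)).
      exists (/ (1 - Cmod z)). apply is_series_geom. rewrite Rabs_pos_eq by apply Cmod_ge_0. exact Hz. }
  destruct Hex as [l Hl']. exists l. exact Hl'.
Qed.

Lemma extremal_deriv_series lam z : Cmod z < 1 ->
  is_series (fun k => (extremal_deriv_coef lam k * z ^ k)%C)
    (RtoC lam * ((1 + z) / (1 - z)) + RtoC (1 - lam) * ((1 + - z) / (1 - - z)))%C.
Proof.
  intros Hz.
  assert (H1 := herglotz_series z Hz).
  assert (H2 := herglotz_series (- z)%C ltac:(rewrite Cmod_opp; exact Hz)).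
  assert (H := is_series_plus _ _ _ _
                 (is_series_scal (K := C_AbsRing) (V := C_NormedModule) (RtoC lam) _ _ H1)
                 (is_series_scal (K := C_AbsRing) (V := C_NormedModule) (RtoC (1 - lam)) _ _ H2)).
  eapply is_series_ext; [|exact H].
  intros k. unfold extremal_deriv_coef.
  change (RtoC lam * (herglotz_coef k * z ^ k) + RtoC (1 - lam) * (herglotz_coef k * (- z) ^ k)
          = (RtoC lam * herglotz_coef k + RtoC (1 - lam) * herglotz_coef k * (-1) ^ k) * z ^ k)%C.
  replace (- z)%C with ((-1) * z)%C by ring. rewrite Cpow_mult_l. ring.
Qed.

Lemma extremal_bounded_turning lam : 0 <= lam <= 1 ->
  bounded_turning (pseries_sum (extremal_coef lam)) (extremal_coef lam).
Proof.
  intros Hl. split; [reflexivity|]. split.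
  { simpl. unfold extremal_deriv_coef, herglotz_coef. simpl. rewrite RtoC_minus. field. }
  split.
  { intros z Hz. apply is_pseries_C, extremal_series; auto. }
  intros z Hz.
  destruct (pseries_derive (extremal_coef lam) (pseries_sum (extremal_coef lam)) 1
              (fun w Hw => extremal_series lam w Hl Hw) z Hz) as [d [Hd Hdf]].
  exists d. split; [exact Hdf|].
  assert (Hd' : is_series (fun k => (extremal_deriv_coef lam k * z ^ k)%C) d).
  { eapply is_series_ext; [|exact Hd]. intros k. unfold extremal_coef; cbv iota beta.
    change (RtoC (INR (S k)) * (extremal_deriv_coef lam k / RtoC (INR (S k))) * z ^ k
            = extremal_deriv_coef lam k * z ^ k)%C.
    field. apply RtoC_neq0, not_0_INR. lia. }
  rewrite (filterlim_locally_unique _ _ _ Hd' (extremal_deriv_series lam z Hz)).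
  pose proof (re_herglotz_pos z Hz).
  pose proof (re_herglotz_pos (- z)%C ltac:(rewrite Cmod_opp; exact Hz)).
  rewrite re_plus, !re_scal_l. nra.
Qed.

Lemma Gamma_extremal_half :
  Gamma1 (extremal_coef (1/2)) = RtoC 0 /\ Gamma2 (extremal_coef (1/2)) = RtoC (-1/3).
Proof.
  unfold Gamma1, Gamma2, extremal_coef, extremal_deriv_coef, herglotz_coef. simpl.
  split; apply injective_projections; simpl; field.
Qed.

Lemma Gamma_extremal_five_sixths :
  Gamma1 (extremal_coef (5/6)) = RtoC (-1/3) /\ Gamma2 (extremal_coef (5/6)) = RtoC 0.
Proof.
  unfold Gamma1, Gamma2, extremal_coef, extremal_deriv_coef, herglotz_coef. simpl.
  split; apply injective_projections; simpl; field.
Qed.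

Theorem mainTheorem10 :
  (forall (f : C -> C) (a : nat -> C), bounded_turning f a ->
     -(1/3) <= Cmod (Gamma2 a) - Cmod (Gamma1 a) <= 1/3) /\
  (exists (f : C -> C) (a : nat -> C), bounded_turning f a /\
     Cmod (Gamma2 a) - Cmod (Gamma1 a) = 1/3) /\
  (exists (f : C -> C) (a : nat -> C), bounded_turning f a /\
     Cmod (Gamma2 a) - Cmod (Gamma1 a) = -(1/3)).
Proof.
  split; [exact Gamma_diff_bound|]. split.
  - exists (pseries_sum (extremal_coef (1/2))), (extremal_coef (1/2)).
    split; [apply extremal_bounded_turning; lra|].
    destruct Gamma_extremal_half as [-> ->].
    rewrite !Cmod_R, Rabs_R0, Rabs_left by lra. lra.
  - exists (pseries_sum (extremal_coef (5/6))), (extremal_coef (5/6)).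
    split; [apply extremal_bounded_turning; lra|].
    destruct Gamma_extremal_five_sixths as [-> ->].
    rewrite !Cmod_R, Rabs_R0, Rabs_left by lra. lra.
Qed.
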